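(* Assume $y_2\ne0$ and $p_1\ne-1$. Then $\widetilde w_0=0$ in $\mathfrak B(V)$ if and only if $(\widetilde q_{12}q_{22}-1)(q_{22}+1)(q_{11}\widetilde q_{12}^{\,2}q_{22}+1)=0$.
   Context: $\Bbbk$ algebraically closed of characteristic $0$. $V$ is braided of diagonal type with basis $x_1,x_2$, $c(x_i\otimes x_j)=q_{ij}x_j\otimes x_i$, $q_{ij}\in\Bbbk^\times$, $q_{ii}\ne1$, $\widetilde q_{12}=q_{12}q_{21}$. $\mathfrak B(V)$ is the Nichols algebra, $\mathbb Z^2$-graded by $\deg x_i=\alpha_i$; $q_{\alpha\beta}$ is the bicharacter with $q_{\alpha_i\alpha_j}=q_{ij}$. $y_0=x_2$, $y_{k+1}=x_1y_k-q_{11}^kq_{12}y_kx_1$, $\beta_k=k\alpha_1+\alpha_2$, $p_k=q_{11}^{k^2}\widetilde q_{12}^{\,k}q_{22}$, $(n)_q=1+\dots+q^{n-1}$. $w_0=y_2y_0-q_{\beta_2\beta_0}y_0y_2$ and $\widetilde w_0=w_0-\dfrac{q_{\beta_1\beta_0}(2)_{q_{11}}(1-q_{11}\widetilde q_{12})}{1+p_1}y_1^2$. *)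

From HB Require Import structures.
From mathcomp Require Import all_boot all_order all_algebra all_fingroup.
Set Implicit Arguments. Unset Strict Implicit. Unset Printing Implicit Defensive.
Import Order.TTheory GRing.Theory Num.Theory.
Local Open Scope ring_scope.

Definition i1 : 'I_2 := ord0.
Definition i2 : 'I_2 := ord_max.

Section Nichols.
Variable K : fieldType.
(* braiding matrix: c(x_i (x) x_j) = q i j x_j (x) x_i *)
Variable q : 'I_2 -> 'I_2 -> K.

(* Tensor algebra T(V): an element is given by its coefficient on each word
   x_{w_1} ... x_{w_n} (w : seq 'I_2).  (Arbitrary coefficient functions
   give the completion; all elements used here are polynomials.) *)
Definition tens := seq 'I_2 -> K.

Definition tadd (u v : tens) : tens := fun w => u w + v w.
Definition tscale (c : K) (u : tens) : tens := fun w => c * u w.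
Definition tsub (u v : tens) : tens := fun w => u w - v w.
Definition tmul (u v : tens) : tens :=
  fun w => \sum_(k < (size w).+1) u (take k w) * v (drop k w).
Definition tx (i : 'I_2) : tens := fun w => if w == [:: i] then 1 else 0.

(* Quantum (braided) symmetrizer Omega_n = sum over sigma in S_n of the
   Matsumoto lift of sigma, applied degreewise; (Omega u) w is the
   coefficient of the word w.  For a source word v the letter at position a
   goes to position s a; each crossing of v_a (left) over v_b (right)
   contributes the factor q v_a v_b. *)
Definition qsym (u : tens) : tens := fun w =>
  \sum_(s : 'S_(size w))
    let v := fun a : 'I_(size w) => nth i1 w (s a) in
    (\prod_(a : 'I_(size w)) \prod_(b : 'I_(size w) | (a < b)%N && (s b < s a)%N)
        q (v a) (v b))
    * u [seq v a | a <- enum 'I_(size w)].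

(* u = 0 in the Nichols algebra B(V) = T(V) / (sum_n ker Omega_n). *)
Definition nichols_zero (u : tens) : Prop := forall w, qsym u w = 0.

Definition qt : K := q i1 i2 * q i2 i1.

(* bicharacter on Z^2 (nonnegative part suffices here):
   q_{alpha beta} with alpha = a.1 alpha_1 + a.2 alpha_2 *)
Definition coord (a : nat * nat) (i : 'I_2) : nat := if i == i1 then a.1 else a.2.
Definition qb (a b : nat * nat) : K :=
  \prod_(i < 2) \prod_(j < 2) q i j ^+ (coord a i * coord b j).
Definition beta (k : nat) : nat * nat := (k, 1%N).

Fixpoint y (k : nat) : tens :=
  match k with
  | 0%N => tx i2
  | k'.+1 => tsub (tmul (tx i1) (y k'))
                 (tscale (q i1 i1 ^+ k' * q i1 i2) (tmul (y k') (tx i1)))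
  end.

Definition p (k : nat) : K := q i1 i1 ^+ (k * k) * qt ^+ k * q i2 i2.

Definition qint (n : nat) (x : K) : K := \sum_(i < n) x ^+ i.

Definition w0 : tens := tsub (tmul (y 2) (y 0)) (tscale (qb (beta 2) (beta 0)) (tmul (y 0) (y 2))).

Definition wt0 : tens :=
  tsub w0 (tscale (qb (beta 1) (beta 0) * qint 2 (q i1 i1) * (1 - q i1 i1 * qt) / (1 + p 1))
                  (tmul (y 1) (y 1))).
End Nichols.

From Pilot Require Import Defs.
From HB Require Import structures.
From mathcomp Require Import all_boot all_order all_algebra all_fingroup.
From mathcomp Require Import ring.
Import GRing.Theory.
Local Open Scope ring_scope.

(* Both y_2 and w~_0 are Z^2-homogeneous, of degrees 2a_1 + a_2 and
   2a_1 + 2a_2, and the quantum symmetrizer preserves the degree.  So each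
   vanishes in B(V) iff its symmetrization vanishes on the 3 (resp. 6) words
   of that degree.  Expanding the symmetrizer there, Omega(y_2) is
   (2)_{q11} (1 - q~12)(1 - q11 q~12) x1x1x2, and Omega(w~_0) vanishes on every
   word but x1x1x2x2, where its coefficient is that same factor times
   -(q~12 q22 - 1)(q22 + 1)(q11 q~12^2 q22 + 1)/(1 + p_1).  The hypothesis
   y_2 <> 0 makes the common factor nonzero. *)

(* [perm_codes n] lists the sequences [s 0; ...; s (n-1)] for s in 'S_n by a
   recursion that [simpl] can unfold, so that sums over 'S_n become explicit. *)
Fixpoint perm_codes (n : nat) : seq (seq nat) :=
  if n is n'.+1 then [seq j :: map (bump j) c | j <- iota 0 n, c <- perm_codes n']
  else [:: [::]].

Definition perm_code {n} (s : 'S_n) : seq nat := [seq val (s i) | i <- enum 'I_n].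

Lemma sum_perm_lift (R : nmodType) n (F : 'S_n.+1 -> R) :
  \sum_(s : 'S_n.+1) F s = \sum_(j : 'I_n.+1) \sum_(s : 'S_n) F (lift_perm ord0 j s).
Proof.
rewrite (partition_big (fun s : 'S_n.+1 => s ord0) predT) //=.
apply: eq_bigr => j _; rewrite (reindex (lift_perm ord0 j)); last first.
  pose ulsf i (s : 'S_n.+1) k := odflt k (unlift (s i) (s (lift i k))).
  have ulsfK i (s : 'S_n.+1) k : lift (s i) (ulsf i s k) = s (lift i k).
    rewrite /ulsf; have:= neq_lift i k.
    by rewrite -(can_eq (permK s)) => /unlift_some[] ? ? ->.
  have inj_ulsf : injective (ulsf ord0 _).
    move=> s; apply: can_inj (ulsf (s ord0) s^-1%g) _ => k.
    by rewrite {1}/ulsf ulsfK !permK liftK.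
  exists (fun s => perm (inj_ulsf s)) => [s _ | s].
    by apply/permP=> k; rewrite permE /ulsf lift_perm_lift lift_perm_id liftK.
  move/(s _ =P _) => s0; apply/permP=> k.
  case: (unliftP ord0 k) => [k'|] ->; rewrite ?lift_perm_id //.
  by rewrite lift_perm_lift -s0 permE ulsfK.
by apply: eq_bigl => s; rewrite lift_perm_id eqxx.
Qed.

Lemma perm_code_lift n (j : 'I_n.+1) (s : 'S_n) :
  perm_code (lift_perm ord0 j s) = val j :: map (bump j) (perm_code s).
Proof.
rewrite /perm_code enum_ordSl /= lift_perm_id; congr (_ :: _).
by rewrite -!map_comp; apply: eq_map => k /=; rewrite lift_perm_lift.
Qed.

Lemma sum_perm_codes (R : nmodType) n (G : seq nat -> R) :
  \sum_(s : 'S_n) G (perm_code s) = \sum_(c <- perm_codes n) G c.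
Proof.
elim: n G => [|n IHn] G.
  by rewrite big_seq1 (eq_bigr (fun=> G [::])) ?sumr_const ?card_Sn // => s;
     rewrite /perm_code enum_ord0.
rewrite sum_perm_lift big_allpairs_dep /=.
under eq_bigr => j _ do under eq_bigr => s _ do rewrite perm_code_lift.
rewrite -(big_mkord xpredT (fun j => \sum_(s : 'S_n) G (j :: map (bump j) (perm_code s)))).
rewrite /index_iota subn0; apply: eq_bigr => j _.
by rewrite (IHn (fun c => G (j :: map (bump j) c))).
Qed.

Lemma nth_perm_code n (s : 'S_n) (a : 'I_n) : nth 0%N (perm_code s) a = s a.
Proof. by rewrite /perm_code (nth_map a) ?size_enum_ord // nth_ord_enum. Qed.

Lemma tmul_iota (K : fieldType) (u v : tens K) w :
  tmul u v w = \sum_(k <- iota 0 (size w).+1) u (take k w) * v (drop k w).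
Proof.
by rewrite /tmul -(big_mkord xpredT (fun k => u (take k w) * v (drop k w))) /index_iota subn0.
Qed.

Section Symmetrizer.
Variables (K : fieldType) (q : 'I_2 -> 'I_2 -> K).

Definition sym_term (u : tens K) (w : seq 'I_2) (c : seq nat) : K :=
  let v a := nth i1 w (nth 0%N c a) in
  (\prod_(a <- iota 0 (size w))
     \prod_(b <- iota 0 (size w) | (a < b)%N && (nth 0%N c b < nth 0%N c a)%N) q (v a) (v b))
  * u (map v (iota 0 (size w))).

Lemma qsym_codes (u : tens K) w : qsym q u w = \sum_(c <- perm_codes (size w)) sym_term u w c.
Proof.
rewrite -sum_perm_codes; apply: eq_bigr => s _.
have iotaE : iota 0 (size w) = index_iota 0 (size w) by rewrite /index_iota subn0.
rewrite /sym_term iotaE big_mkord; congr (_ * _).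
  apply: eq_bigr => a _; rewrite big_mkord.
  by apply: eq_big => [b|b _]; rewrite !nth_perm_code.
by congr u; rewrite /index_iota subn0 -val_enum_ord -map_comp; apply: eq_map => a /=;
   rewrite nth_perm_code.
Qed.

Lemma qsymB (u v : tens K) w : qsym q (tsub u v) w = qsym q u w - qsym q v w.
Proof. by rewrite /qsym -sumrB; apply: eq_bigr => s _ /=; rewrite /tsub mulrBr. Qed.

Lemma qsymZ c (u : tens K) w : qsym q (tscale c u) w = c * qsym q u w.
Proof. by rewrite /qsym mulr_sumr; apply: eq_bigr => s _ /=; rewrite /tscale mulrCA. Qed.

End Symmetrizer.

Definition content (w : seq 'I_2) : nat * nat := (count_mem i1 w, count_mem i2 w).

Lemma content_cat s t :
  content (s ++ t) = ((content s).1 + (content t).1, (content s).2 + (content t).2)%N.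
Proof. by rewrite /content !count_cat. Qed.

Lemma content_perm {s t} : perm_eq s t -> content s = content t.
Proof. by move/seq.permP=> st; rewrite /content !st. Qed.

Lemma ord2P (i : 'I_2) : i = i1 \/ i = i2.
Proof. by case: i => [[|[|m]] lt_i2]; [left; apply: val_inj|right; apply: val_inj|]. Qed.

Lemma size_content w : size w = ((content w).1 + (content w).2)%N.
Proof.
elim: w => [|i w IHw] //=; rewrite IHw /content /=.
by case: (ord2P i) => ->; rewrite /= ?addnS.
Qed.

Section Homogeneous.
Context {K : fieldType}.

Definition tens_homog (d : nat * nat) (u : tens K) := forall w, content w != d -> u w = 0.

Lemma tens_homog_tx1 : tens_homog (1, 0)%N (tx K i1).
Proof. by move=> w; rewrite /tx; case: ifP => // /eqP->. Qed.

Lemma tens_homog_tx2 : tens_homog (0, 1)%N (tx K i2).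
Proof. by move=> w; rewrite /tx; case: ifP => // /eqP->. Qed.

Lemma tens_homog_tmul {d e} {u v : tens K} : tens_homog d u -> tens_homog e v ->
  tens_homog (d.1 + e.1, d.2 + e.2)%N (tmul u v).
Proof.
move=> hu hv w hw; rewrite /tmul big1 // => k _.
have [dk|/hu->] := eqVneq (content (take k w)) d; last by rewrite mul0r.
rewrite hv ?mulr0 //; apply: contraNneq hw => ek.
by rewrite -(cat_take_drop k w) content_cat dk ek.
Qed.

Lemma tens_homog_tsub {d} {u v : tens K} :
  tens_homog d u -> tens_homog d v -> tens_homog d (tsub u v).
Proof. by move=> hu hv w hw; rewrite /tsub hu // hv // subr0. Qed.

Lemma tens_homog_tscale {d} c {u : tens K} : tens_homog d u -> tens_homog d (tscale c u).
Proof. by move=> hu w hw; rewrite /tscale hu // mulr0. Qed.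

Variable q : 'I_2 -> 'I_2 -> K.

Lemma tens_homog_y k : tens_homog (beta k) (y q k).
Proof.
elim: k => [|k IHk] /=; first exact: tens_homog_tx2.
apply: tens_homog_tsub; first by have := tens_homog_tmul tens_homog_tx1 IHk.
apply: tens_homog_tscale.
by have := tens_homog_tmul IHk tens_homog_tx1; rewrite !addn0 !addn1.
Qed.

Lemma tens_homog_wt0 : tens_homog (2, 2)%N (wt0 q).
Proof.
have hyy j k : tens_homog (j + k, 2)%N (tmul (y q j) (y q k)).
  exact: tens_homog_tmul (tens_homog_y j) (tens_homog_y k).
apply: tens_homog_tsub; last exact/tens_homog_tscale/(hyy 1%N 1%N).
apply: tens_homog_tsub; first exact: (hyy 2%N 0%N).
exact/tens_homog_tscale/(hyy 0%N 2%N).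
Qed.

Lemma perm_eq_permuted_word {w} (s : 'S_(size w)) :
  perm_eq [seq nth i1 w (s a) | a <- enum 'I_(size w)] w.
Proof.
have wE : map (nth i1 w \o val) (enum 'I_(size w)) = w.
  by rewrite map_comp val_enum_ord -/(mkseq _ _) mkseq_nth.
have -> : [seq nth i1 w (s a) | a <- enum 'I_(size w)] =
    map (nth i1 w \o val) (map s (enum 'I_(size w))).
  exact: (map_comp (nth i1 w \o val) s).
rewrite -[X in perm_eq _ X]wE; apply: perm_map.
apply: uniq_perm; rewrite ?(map_inj_uniq (@perm_inj _ s)) ?enum_uniq // => a.
by rewrite mem_enum -[a](permKV s) (mem_map (@perm_inj _ s)) mem_enum.
Qed.

Lemma qsym_homog d (u : tens K) w : tens_homog d u -> content w != d -> qsym q u w = 0.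
Proof.
move=> hu hw; rewrite /qsym big1 // => s _ /=.
by rewrite hu ?mulr0 // (content_perm (perm_eq_permuted_word s)).
Qed.

Lemma nichols_zero_homog_single {d} {u : tens K} {ws : seq (seq 'I_2)} {w0 c} :
  tens_homog d u -> (forall w, content w = d -> w \in ws) -> w0 \in ws ->
  {in ws, forall w, qsym q u w = c * (w == w0)%:R} ->
  nichols_zero q u <-> c = 0.
Proof.
move=> hu hd w0ws huw; split=> [u0 | c0 w].
  by have := huw _ w0ws; rewrite u0 eqxx mulr1.
have [/hd/huw->|] := eqVneq (content w) d; first by rewrite c0 mul0r.
exact: qsym_homog.
Qed.

End Homogeneous.

Definition words_2_1 : seq (seq 'I_2) := [:: [:: i1; i1; i2]; [:: i1; i2; i1]; [:: i2; i1; i1]].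

Definition words_2_2 : seq (seq 'I_2) :=
  [:: [:: i1; i1; i2; i2]; [:: i1; i2; i1; i2]; [:: i1; i2; i2; i1];
      [:: i2; i1; i1; i2]; [:: i2; i1; i2; i1]; [:: i2; i2; i1; i1]].

Lemma mem_words_2_1 w : content w = (2, 1)%N -> w \in words_2_1.
Proof.
move=> cw; have := size_content w; rewrite cw.
case: w cw => [|x1 [|x2 [|x3 [|? ?]]]] //= cw _.
by case: (ord2P x1) cw => ->; case: (ord2P x2) => ->; case: (ord2P x3) => ->.
Qed.

Lemma mem_words_2_2 w : content w = (2, 2)%N -> w \in words_2_2.
Proof.
move=> cw; have := size_content w; rewrite cw.
case: w cw => [|x1 [|x2 [|x3 [|x4 [|? ?]]]]] //= cw _.
by case: (ord2P x1) cw => ->; case: (ord2P x2) => ->; case: (ord2P x3) => ->;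
   case: (ord2P x4) => ->.
Qed.

(* [tensor_value t] records [t = v] with v the (unnormalized) value of the
   coordinate t, computed by unfolding the tensor operations. *)
Ltac eval_tensor := repeat progress rewrite /= /tsub /tscale /tx ?tmul_iota ?unlock /=.

Ltac tensor_value t :=
  let e := fresh "e" in
  eassert (e : t = _) by (eval_tensor; reflexivity);
  rewrite ?mul0r ?mulr0 ?add0r ?addr0 ?subr0 ?sub0r ?expr0 ?expr1 ?mul1r ?mulr1 in e.

Ltac tensor_values u ws :=
  lazymatch ws with
  | ?w :: ?ws' => tensor_value (u w); tensor_values u ws'
  | _ => idtac
  end.

Ltac rewrite_values := repeat match goal with e : _ = _ |- _ => rewrite e; clear e end.

Section Computation.
Context {K : fieldType}.
Variable q : 'I_2 -> 'I_2 -> K.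

Lemma qb_beta j k :
  qb q (beta j) (beta k) = q i1 i1 ^+ (j * k) * q i1 i2 ^+ j * q i2 i1 ^+ k * q i2 i2.
Proof.
have lift00 : lift ord0 ord0 = i2 :> 'I_2 by apply: val_inj.
rewrite /qb !big_ord_recl !big_ord0 lift00 /Defs.coord /=.
by rewrite !muln1 !mul1n !mulr1 !expr1 mulrA.
Qed.

Lemma qint2 (x : K) : qint 2 x = 1 + x.
Proof. by rewrite /qint big_ord_recl big_ord1 expr0 expr1. Qed.

Lemma qsym_wt0E w : qsym q (wt0 q) w =
  qsym q (tmul (y q 2) (y q 0)) w - q i1 i2 ^+ 2 * q i2 i2 * qsym q (tmul (y q 0) (y q 2)) w
  - q i1 i2 * q i2 i2 * (1 + q i1 i1) * (1 - q i1 i1 * qt q) / (1 + p q 1)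
    * qsym q (tmul (y q 1) (y q 1)) w.
Proof. rewrite /wt0 /w0 !qsymB !qsymZ !qb_beta qint2; ring. Qed.

Lemma qsym_y2 : {in words_2_1, forall w, qsym q (y q 2) w =
  (1 + q i1 i1) * (1 - qt q) * (1 - q i1 i1 * qt q) * (w == [:: i1; i1; i2])%:R}.
Proof.
let ws := eval unfold words_2_1 in words_2_1 in tensor_values (y q 2) ws.
set (u := y q 2) in *; clearbody u.
move=> w; rewrite !inE => /or3P[] /eqP->; rewrite qsym_codes /sym_term unlock /=;
  rewrite_values; rewrite /qt; ring.
Qed.

Lemma nichols_zero_y2 :
  nichols_zero q (y q 2) <-> (1 + q i1 i1) * (1 - qt q) * (1 - q i1 i1 * qt q) = 0.
Proof.
have hy2 : tens_homog (2, 1)%N (y q 2) := tens_homog_y q 2.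
by apply: (nichols_zero_homog_single q hy2 mem_words_2_1 _ qsym_y2).
Qed.

Hypothesis hp : 1 + p q 1 != 0.

Lemma qsym_wt0 : {in words_2_2, forall w, qsym q (wt0 q) w =
  - ((1 + q i1 i1) * (1 - qt q) * (1 - q i1 i1 * qt q)
     * ((qt q * q i2 i2 - 1) * (q i2 i2 + 1) * (q i1 i1 * qt q ^+ 2 * q i2 i2 + 1)))
  / (1 + p q 1) * (w == [:: i1; i1; i2; i2])%:R}.
Proof.
move=> w ww; rewrite qsym_wt0E.
let ws := eval unfold words_2_2 in words_2_2 in
  tensor_values (tmul (y q 2) (y q 0)) ws; tensor_values (tmul (y q 0) (y q 2)) ws;
  tensor_values (tmul (y q 1) (y q 1)) ws.
(* Made opaque so that [simpl] keeps these tensors folded while the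
   symmetrizer is expanded. *)
set (A := tmul (y q 2) (y q 0)) in *; set (B := tmul (y q 0) (y q 2)) in *;
  set (C := tmul (y q 1) (y q 1)) in *; clearbody A B C.
move: ww; rewrite !inE => /orP[|/orP[|/orP[|/orP[|/orP[]]]]] /eqP->;
  rewrite !qsym_codes /sym_term unlock /=; rewrite_values.
all: move: hp; rewrite /p /qt mul1n !expr1 => hp_unfolded.
all: by field.
Qed.

Lemma nichols_zero_wt0 : nichols_zero q (wt0 q) <->
  (1 + q i1 i1) * (1 - qt q) * (1 - q i1 i1 * qt q)
  * ((qt q * q i2 i2 - 1) * (q i2 i2 + 1) * (q i1 i1 * qt q ^+ 2 * q i2 i2 + 1)) = 0.
Proof.
apply: iff_trans
  (nichols_zero_homog_single q (tens_homog_wt0 q) mem_words_2_2 _ qsym_wt0) _ => //.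
split=> [/eqP|->]; last by rewrite oppr0 mul0r.
by rewrite mulf_eq0 invr_eq0 (negbTE hp) orbF oppr_eq0 => /eqP.
Qed.

End Computation.

Theorem lemma4 (K : closedFieldType) (q : 'I_2 -> 'I_2 -> K)
  (hchar : [pchar K] =i pred0)
  (hq0 : forall i j, q i j != 0)
  (hq1 : forall i, q i i != 1)
  (hy2 : ~ nichols_zero q (y q 2))
  (hp1 : p q 1 != -1) :
  nichols_zero q (wt0 q) <->
  (qt q * q i2 i2 - 1) * (q i2 i2 + 1) * (q i1 i1 * qt q ^+ 2 * q i2 i2 + 1) = 0.
Proof.
(* The hypotheses on the characteristic and on q are standing assumptions of
   the paper; the computation does not need them. *)
have hp : 1 + p q 1 != 0 by rewrite addrC addr_eq0.
have hy2F : (1 + q i1 i1) * (1 - qt q) * (1 - q i1 i1 * qt q) != 0.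
  by apply/eqP => /(nichols_zero_y2 q)/hy2.
apply: iff_trans (nichols_zero_wt0 q hp) _.
split=> [/eqP|->]; last by rewrite mulr0.
by rewrite mulf_eq0 (negbTE hy2F) => /eqP.
Qed.
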